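(* Let $R$ be a $\star$-ring and $e\in P(R)$. If $a\in eRe$ is strongly $\star$-clean in the corner ring $eRe$, then $a$ is strongly $\star$-clean in $R$.
   Context: Rings are associative with identity. A $\star$-ring is a ring with a map $\star$ satisfying $(x+y)^\star=x^\star+y^\star$, $(xy)^\star=y^\star x^\star$, $(x^\star)^\star=x$. A projection is $p$ with $p^2=p=p^\star$; $P(R)$ is the set of projections, $U(R)$ the units. For $e\in P(R)$, $eRe$ is a $\star$-ring with identity $e$ and the restricted involution. An element $x$ of a $\star$-ring $S$ is strongly $\star$-clean if $x=u+p$ with $u\in U(S)$, $p\in P(S)$ and $up=pu$. *)

From mathcomp Require Import all_boot all_algebra.
Set Implicit Arguments. Unset Strict Implicit. Unset Printing Implicit Defensive.
Import GRing.Theory.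
Local Open Scope ring_scope.

Definition is_involution (R : pzRingType) (star : R -> R) : Prop :=
  [/\ forall x y, star (x + y) = star x + star y,
      forall x y, star (x * y) = star y * star x &
      forall x, star (star x) = x].

Definition is_projection (R : pzRingType) (star : R -> R) (p : R) : Prop :=
  p * p = p /\ p = star p.

Definition in_corner (R : pzRingType) (e x : R) : Prop :=
  exists r : R, x = e * r * e.

Definition corner_unit (R : pzRingType) (e u : R) : Prop :=
  in_corner e u /\ exists v, in_corner e v /\ u * v = e /\ v * u = e.

Definition corner_projection (R : pzRingType) (star : R -> R) (e p : R) : Prop :=
  in_corner e p /\ is_projection star p.

Definition strongly_star_clean_corner (R : pzRingType) (star : R -> R) (e x : R) : Prop :=
  exists u p, [/\ corner_unit e u, corner_projection star e p, u * p = p * u & x = u + p].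

Definition is_unit (R : pzRingType) (u : R) : Prop :=
  exists v, u * v = 1 /\ v * u = 1.

Definition strongly_star_clean (R : pzRingType) (star : R -> R) (x : R) : Prop :=
  exists u p, [/\ is_unit u, is_projection star p, u * p = p * u & x = u + p].

From mathcomp Require Import all_boot all_algebra.
Local Open Scope ring_scope.
Import GRing.Theory.

(* With [f := 1 - e], elements of eRe annihilate f on both sides.  So if [a = u + p]
   in eRe, then [a = (u - f) + (p + f)]: [u - f] is a unit with inverse [v - f]
   (where [v] is the inverse of [u] in eRe), [p + f] is a sum of two orthogonal
   projections, and the two still commute. *)

Section Involution.

Variables (R : pzRingType) (star : R -> R).
Hypothesis star_inv : is_involution star.

Lemma involution0 : star 0 = 0.
Proof. by case: star_inv => sD _ _; apply: (addrI (star 0)); rewrite -sD !addr0. Qed.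

Lemma involutionN (x : R) : star (- x) = - star x.
Proof.
by case: star_inv => sD _ _; apply: (addrI (star x)); rewrite -sD !subrr involution0.
Qed.

Lemma involution1 : star 1 = 1.
Proof. by case: star_inv => _ sM sK; have := sM (star 1) 1; rewrite !sK !mulr1 => <-. Qed.

Lemma is_projection_compl (e : R) : is_projection star e -> is_projection star (1 - e).
Proof.
case: star_inv => sD _ _ [ee se]; split.
- by rewrite mulrBr mulr1 mulrBl mul1r ee subrr subr0.
- by rewrite sD involutionN involution1 -se.
Qed.

Lemma is_projection_add_orth (p q : R) :
  is_projection star p -> is_projection star q -> p * q = 0 -> q * p = 0 ->
  is_projection star (p + q).
Proof.
case: star_inv => sD _ _ [pp sp] [qq sq] pq qp; split.
- by rewrite mulrDr !mulrDl pp qq pq qp addr0 add0r.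
- by rewrite sD -sp -sq.
Qed.

End Involution.

Section Corner.

Variables (R : pzRingType) (e : R).
Hypothesis ee : e * e = e.

Lemma in_corner_mull {x : R} : in_corner e x -> e * x = x.
Proof. by move=> [r ->]; rewrite !mulrA ee. Qed.

Lemma in_corner_mulr {x : R} : in_corner e x -> x * e = x.
Proof. by move=> [r ->]; rewrite -!mulrA ee. Qed.

Lemma in_corner_mulCl {x : R} : in_corner e x -> (1 - e) * x = 0.
Proof. by move=> cx; rewrite mulrBl mul1r in_corner_mull ?subrr. Qed.

Lemma in_corner_mulCr {x : R} : in_corner e x -> x * (1 - e) = 0.
Proof. by move=> cx; rewrite mulrBr mulr1 in_corner_mulr ?subrr. Qed.

Lemma idempotent_compl : (1 - e) * (1 - e) = 1 - e.
Proof. by rewrite mulrBr mulr1 mulrBl mul1r ee subrr subr0. Qed.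

Lemma corner_mul_sub_compl (x y : R) : in_corner e x -> in_corner e y ->
  (x - (1 - e)) * (y - (1 - e)) = x * y + (1 - e).
Proof.
move=> cx cy; have xf := in_corner_mulCr cx; have fy := in_corner_mulCl cy.
have ff := idempotent_compl; set f := 1 - e in xf fy ff *; clearbody f.
by rewrite mulrBr !mulrBl xf fy ff subr0 sub0r opprK.
Qed.

Lemma corner_unit_sub_compl (u : R) : corner_unit e u -> is_unit (u - (1 - e)).
Proof.
move=> [cu [v [cv [uv vu]]]]; exists (v - (1 - e)).
by split; rewrite corner_mul_sub_compl // ?uv ?vu addrC subrK.
Qed.

Lemma corner_commute_compl (u p : R) : in_corner e u -> in_corner e p ->
  u * p = p * u -> (u - (1 - e)) * (p + (1 - e)) = (p + (1 - e)) * (u - (1 - e)).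
Proof.
move=> cu cp up; have uf := in_corner_mulCr cu; have pf := in_corner_mulCr cp.
have fu := in_corner_mulCl cu; have fp := in_corner_mulCl cp.
set f := 1 - e in uf pf fu fp *; clearbody f.
by rewrite mulrBl mulrBr !mulrDl !mulrDr up uf pf fu fp.
Qed.

End Corner.

Theorem proposition4p13 (R : pzRingType) (star : R -> R) (e a : R) :
  is_involution star ->
  is_projection star e ->
  in_corner e a ->
  strongly_star_clean_corner star e a ->
  strongly_star_clean star a.
Proof.
move=> star_inv pe _ [u [p [unit_u [cp proj_p] up ->]]].
have ee : e * e = e by case: pe.
have cu : in_corner e u by case: unit_u.
exists (u - (1 - e)), (p + (1 - e)); split.
- exact: corner_unit_sub_compl.
- apply: is_projection_add_orth => //.
  + exact: is_projection_compl.
  + exact: in_corner_mulCr.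
  + exact: in_corner_mulCl.
- exact: corner_commute_compl.
- by rewrite addrA addrAC subrK.
Qed.
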